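(* Let $G$ be a group acting effectively by homeomorphisms on a Tychonoff space $X$ via $\theta$, let $\tau_p$ be the topology of pointwise convergence on $G$ for this action, and assume that $((G,\tau_p),X,\theta)$ is a $G$-Tychonoff space. Let $bX$ be a $G$-compactification of $X$ and let $\tilde\theta:G\times bX\to bX$ be the extended action. Then the topology of pointwise convergence $\tau_p^{bX}$ on $G$ for $\tilde\theta$ is the least admissible group topology on $G$ for the action on $bX$, and $\tau_p^{bX}=\tau_p$.
   Context: All spaces are Tychonoff. For a group $G$ acting effectively by homeomorphisms on a space $X$, the topology of pointwise convergence $\tau_p$ on $G$ is the topology with subbase the sets $[x,O]=\{g\in G: gx\in O\}$, $x\in X$, $O$ open in $X$. A group topology on $G$ is admissible for the action if it makes $G$ a topological group and the action $G\times X\to X$ continuous. An equiuniformity on a $G$-space $X$ (topological group $G$ acting continuously) is a uniformity compatible with the topology of $X$ such that every $g\in G$ acts uniformly continuously and for every uniform cover $u$ there are a neighbourhood $O$ of the identity $e$ and a uniform cover $v$ with $\{OV:V\in v\}$ refining $u$; $X$ is $G$-Tychonoff if it admits an equiuniformity. A $G$-compactification of $X$ is the completion of $X$ with respect to a totally bounded equiuniformity; the action extends continuously to it and the embedding is equivariant. *)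

From HB Require Import structures.
From mathcomp Require Import all_boot all_order monoid.
From mathcomp Require Import all_classical all_reals topology normedtype urysohn.
From mathcomp Require Import Rstruct Rstruct_topology.
Set Implicit Arguments. Unset Strict Implicit. Unset Printing Implicit Defensive.
Local Open Scope classical_set_scope.
Local Open Scope group_scope.

Definition tychonoff_space (X : topologicalType) : Prop :=
  accessible_space X /\ completely_regular_space X.

Definition embedding (X Y : topologicalType) (i : X -> Y) : Prop :=
  [/\ injective i, continuous i &
      forall U : set X, open U -> exists2 V : set Y, open V & i @^-1` V = U].

Section GroupDefs.
Variable G : groupType.

Definition topology_on (T : set (set G)) : Prop :=
  [/\ T set0, T setT,
      (forall A B, T A -> T B -> T (A `&` B)) &
      (forall F : set (set G), F `<=` T -> T (\bigcup_(A in F) A))].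

Definition gen_topology (S : set (set G)) : set (set G) :=
  [set A | forall g, A g -> exists (n : nat) (B : nat -> set G),
     [/\ (forall k, (k < n)%N -> S (B k)),
         (forall k, (k < n)%N -> B k g) &
         [set h | forall k, (k < n)%N -> B k h] `<=` A]].

Definition group_topology (T : set (set G)) : Prop :=
  [/\ topology_on T,
      (forall (g h : G) (W : set G), T W -> W (g * h) ->
         exists (U V : set G), [/\ T U, U g, T V, V h &
            forall u v, U u -> V v -> W (u * v)]) &
      (forall (g : G) (W : set G), T W -> W (g^-1) ->
         exists U : set G, [/\ T U, U g & forall u, U u -> W (u^-1)])].

Definition is_action (Y : Type) (a : G -> Y -> Y) : Prop :=
  (forall y, a 1 y = y) /\ (forall g h y, a (g * h) y = a g (a h y)).

Definition by_homeomorphisms (Y : topologicalType) (a : G -> Y -> Y) : Prop :=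
  is_action a /\ forall g, continuous (a g).

Definition effective (Y : Type) (a : G -> Y -> Y) : Prop :=
  forall g, (forall y, a g y = y) -> g = 1.

Definition action_continuous (T : set (set G)) (Y : topologicalType)
  (a : G -> Y -> Y) : Prop :=
  forall (g : G) (y : Y) (W : set Y), open W -> W (a g y) ->
    exists (U : set G) (V : set Y), [/\ T U, U g, open V, V y &
      forall h z, U h -> V z -> W (a h z)].

Definition admissible (T : set (set G)) (Y : topologicalType)
  (a : G -> Y -> Y) : Prop :=
  group_topology T /\ action_continuous T a.

Definition least_admissible (T : set (set G)) (Y : topologicalType)
  (a : G -> Y -> Y) : Prop :=
  admissible T a /\ forall T', admissible T' a -> T `<=` T'.

Definition pointwise_topology (Y : topologicalType) (a : G -> Y -> Y)
  : set (set G) :=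
  gen_topology [set A | exists (y : Y) (O : set Y),
                          open O /\ A = [set g | O (a g y)]].

(* Uniformities given by uniform covers (Engelking, Sect. 8.1).        *)
Section Covers.
Variable X : topologicalType.

Definition is_cover (u : set (set X)) : Prop :=
  forall x, exists2 A, u A & A x.

Definition refines (u v : set (set X)) : Prop :=
  forall A, u A -> exists2 B, v B & A `<=` B.

Definition star (A : set X) (u : set (set X)) : set X :=
  \bigcup_(B in [set B | u B /\ B `&` A !=set0]) B.

Definition star_refines (u v : set (set X)) : Prop :=
  forall A, u A -> exists2 B, v B & star A u `<=` B.

Definition uniformity_of (mu : set (set (set X))) : Prop :=
  [/\ mu !=set0,
      (forall u, mu u -> is_cover u),
      (forall u v, mu u -> is_cover v -> refines u v -> mu v),
      (forall u v, mu u -> mu v ->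
         exists2 w, mu w & star_refines w u /\ star_refines w v) &
      (forall x y : X, x <> y ->
         exists2 u, mu u & forall A, u A -> ~ (A x /\ A y))].

Definition compatible (mu : set (set (set X))) : Prop :=
  forall U : set X, open U <->
    (forall x, U x -> exists2 u, mu u & star [set x] u `<=` U).

Definition equiuniformity (T : set (set G)) (a : G -> X -> X)
  (mu : set (set (set X))) : Prop :=
  [/\ uniformity_of mu, compatible mu,
      (forall g u, mu u -> mu [set B | exists2 A, u A & B = a g @^-1` A]) &
      (forall u, mu u -> exists (O : set G) (v : set (set X)),
         [/\ T O, O 1, mu v &
           refines [set W | exists2 V, v V &
                      W = [set z | exists h y, [/\ O h, V y & z = a h y]]] u])].

Definition G_tychonoff (T : set (set G)) (a : G -> X -> X) : Prop :=
  admissible T a /\ exists mu, equiuniformity T a mu.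

Definition G_compactification (T : set (set G)) (a : G -> X -> X)
  (bX : topologicalType) (i : X -> bX) (b : G -> bX -> bX) : Prop :=
  [/\ hausdorff_space bX, compact [set: bX], is_action b &
      action_continuous T b] /\
  [/\ embedding i,
      closure (range i) = setT &
      forall g x, i (a g x) = b g (i x)].
End Covers.

End GroupDefs.

(* The pointwise topology of an action is the coarsest topology on G for
   which every orbit map g |-> g y is continuous, so it is coarser than every
   topology making the action jointly continuous; in particular it is coarser
   than every admissible topology. Since X embeds equivariantly in bX, each
   subbasic set [x, O] for X is a subbasic set [i x, V] for bX with
   i^-1(V) = O, so tau_p <= tau_p^bX. Conversely the action on bX is
   continuous for tau_p, whence tau_p^bX <= tau_p. Thus the two coincide, and
   tau_p^bX, being admissible for the action on bX, is the least such
   topology. *)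
From HB Require Import structures.
From mathcomp Require Import all_boot all_order monoid.
From mathcomp Require Import all_classical all_reals topology normedtype urysohn.
Local Open Scope classical_set_scope.
Local Open Scope group_scope.

Section TopologyOn.
Variables (G : groupType) (T : set (set G)).
Hypothesis topT : topology_on T.

Lemma topology_on_finite_meet n (B : nat -> set G) :
  (forall k, (k < n)%N -> T (B k)) -> T [set h | forall k, (k < n)%N -> B k h].
Proof.
have [_ TT TI _] := topT.
elim: n B => [|n IHn] B TB.
  by rewrite (_ : [set h | _] = setT) //; apply/seteqP; split.
have -> : [set h | forall k, (k < n.+1)%N -> B k h] =
    [set h | forall k, (k < n)%N -> B k h] `&` B n.
  apply/seteqP; split => h.
    by move=> Bh; split => [k kn|]; apply: Bh => //; apply: ltnW.
  by move=> [Bh Bnh] k; rewrite ltnS leq_eqVlt => /orP[/eqP->|/Bh].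
by apply: TI; [apply: IHn => k kn; apply/TB/ltnW | apply: TB].
Qed.

Lemma topology_on_locally (A : set G) :
  (forall g, A g -> exists2 U, T U & U g /\ U `<=` A) -> T A.
Proof.
have [_ _ _ TU] := topT; move=> Aloc.
have -> : A = \bigcup_(U in [set U | T U /\ U `<=` A]) U.
  apply/seteqP; split => [g /Aloc[U TU' [Ug UA]]|g [U [_ UA] /UA]] //.
  by exists U.
by apply: TU => U [].
Qed.

Lemma gen_topology_min (S : set (set G)) : S `<=` T -> gen_topology S `<=` T.
Proof.
move=> ST A Agen; apply: topology_on_locally => g /Agen[n [B [SB Bg BA]]].
exists [set h | forall k, (k < n)%N -> B k h] => //.
by apply: topology_on_finite_meet => k /SB/ST.
Qed.

End TopologyOn.

Lemma gen_topology_subset (G : groupType) (S S' : set (set G)) :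
  S `<=` S' -> gen_topology S `<=` gen_topology S'.
Proof.
move=> SS' A Agen g /Agen[n [B [SB Bg BA]]].
by exists n, B; split => // k /SB/SS'.
Qed.

Lemma pointwise_topology_min (G : groupType) (T : set (set G))
  (Y : topologicalType) (a : G -> Y -> Y) :
  topology_on T -> action_continuous T a -> pointwise_topology a `<=` T.
Proof.
move=> topT acT; apply: gen_topology_min => // _ [y [O [oO ->]]].
apply: topology_on_locally => // g Ogy.
have [U [V [TU Ug _ Vy UVO]]] := acT g y O oO Ogy.
by exists U => //; split => // h Uh; apply: UVO.
Qed.

Lemma pointwise_topology_embedding (G : groupType) (X Y : topologicalType)
  (a : G -> X -> X) (b : G -> Y -> Y) (i : X -> Y) :
  embedding i -> (forall g x, i (a g x) = b g (i x)) ->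
  pointwise_topology a `<=` pointwise_topology b.
Proof.
move=> [_ _ iopen] ieqv; apply: gen_topology_subset => _ [x [O [oO ->]]].
have [V oV iVO] := iopen O oO.
exists (i x), V; split => //.
by apply/seteqP; split => g /=; rewrite -iVO /preimage /= ieqv.
Qed.

Theorem mainTheorem1 (G : groupType) (X : topologicalType)
  (theta : G -> X -> X) (bX : topologicalType) (i : X -> bX)
  (theta' : G -> bX -> bX) :
  tychonoff_space X ->
  by_homeomorphisms theta ->
  effective theta ->
  G_tychonoff (pointwise_topology theta) theta ->
  G_compactification (pointwise_topology theta) theta i theta' ->
  least_admissible (pointwise_topology theta') theta' /\
  pointwise_topology theta' = pointwise_topology theta.
Proof.
move=> _ _ _ [[gtT _] _] [[_ _ _ acT'] [emb _ ieqv]].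
have topT : topology_on (pointwise_topology theta) by case: gtT.
have pw_eq : pointwise_topology theta' = pointwise_topology theta.
  apply/seteqP; split; first exact: pointwise_topology_min.
  exact: pointwise_topology_embedding emb ieqv.
split => //; rewrite pw_eq; split; first by [].
by move=> T' [[topT' _ _] acT'']; rewrite -pw_eq; apply: pointwise_topology_min.
Qed.
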